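(* Let $d>0$ be square-free and $A=\begin{pmatrix}a&B\\ \bar B&c\end{pmatrix}$ with $a,c\in\mathbb{Z}$, $B\in\mathcal{O}_d$, $D=|B|^2-ac>0$. If $A$ corresponds to an embedded totally geodesic surface in $\Omega_d$, then $$4D\le \min_{x,y\in\mathcal{O}_d:\ Q_A(x,y)\neq0} Q_A(x,y)^2,$$ where $Q_A(x,y)=\begin{pmatrix}x&y\end{pmatrix}A\begin{pmatrix}\bar x\\ \bar y\end{pmatrix}$.
   Context: $\mathcal{O}_d$ is the ring of integers of $\mathbb{Q}(\sqrt{-d})$, $\Gamma_d=\mathrm{PSL}(2,\mathcal{O}_d)$, $\Omega_d=\mathbb{H}^3/\Gamma_d$. The surface corresponding to $A$ is the image in $\Omega_d$ of the hyperbolic plane $H$ bounded by the circle/line $\{z: Q_A(z,1)=0\}$; it is embedded if for all $\gamma\in\Gamma_d$, $\gamma H=H$ or $\gamma H\cap H=\emptyset$. *)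

From HB Require Import structures.
From mathcomp Require Import all_boot all_order all_algebra.
From mathcomp Require Import complex.
From mathcomp Require Import Rstruct.

Set Implicit Arguments.
Unset Strict Implicit.
Unset Printing Implicit Defensive.

Import Order.TTheory GRing.Theory Num.Theory.
Local Open Scope ring_scope.
Local Open Scope complex_scope.

Definition C : Type := (Rdefinitions.R)[i].

Definition squarefree (d : nat) : Prop :=
  (0 < d)%N /\ forall p : nat, prime p -> ~~ (p * p %| d)%N.

(** The standard integral generator omega_d of O_d, the ring of integers of
    Q(sqrt(-d)) (d square-free):  O_d = Z[omega_d] with
    omega_d = (1 + sqrt(-d))/2 if -d = 1 mod 4 (i.e. d = 3 mod 4),
    omega_d = sqrt(-d) otherwise. *)
Definition sqrt_minus (d : nat) : C :=
  'i * (Num.sqrt (d%:R : Rdefinitions.R))%:C.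

Definition omega (d : nat) : C :=
  if (d %% 4 == 3)%N then (1 + sqrt_minus d) / 2 else sqrt_minus d.

Definition inO (d : nat) (z : C) : Prop :=
  exists u v : int, z = u%:~R + v%:~R * omega d.

Definition QA (a : int) (B : C) (c : int) (x y : C) : C :=
  a%:~R * x * x^* + B * x * y^* + B^* * y * x^* + c%:~R * y * y^*.

(** Upper half-space model of H^3: points (z, t) with z : C and t a positive
    real number (encoded as an element of C with 0 < t, i.e. t real > 0). *)
Definition H3 (p : C * C) : Prop := 0 < p.2.

(** Action of g = [[al, be], [ga, de]] in SL(2, C) on H^3 (Poincare extension):
    (z, t) |-> ( ((al z + be) conj(ga z + de) + al conj(ga) t^2) / N , t / N )
    with N = |ga z + de|^2 + |ga|^2 t^2. *)
Definition mob_act (al be ga de : C) (p : C * C) : C * C :=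
  let z := p.1 in let t := p.2 in
  let N := (ga * z + de) * (ga * z + de)^* + ga * ga^* * t ^+ 2 in
  (((al * z + be) * (ga * z + de)^* + al * ga^* * t ^+ 2) / N, t / N).

(** The hyperbolic plane H_A in H^3 bounded by the circle/line
    {z : Q_A(z,1) = 0} = {z : a|z|^2 + B z + conj(B) conj(z) + c = 0}:
    the hemisphere / vertical half-plane a(|z|^2 + t^2) + B z + conj(B) conj(z) + c = 0. *)
Definition plane (a : int) (B : C) (c : int) (p : C * C) : Prop :=
  H3 p /\
  a%:~R * (p.1 * p.1^* + p.2 ^+ 2) + B * p.1 + B^* * p.1^* + c%:~R = 0.

(** Elements of Gamma_d = PSL(2, O_d), represented by matrices of SL(2, O_d)
    (g and -g act identically on H^3). *)
Definition in_SL2O (d : nat) (al be ga de : C) : Prop :=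
  [/\ inO d al, inO d be, inO d ga, inO d de & al * de - be * ga = 1].

Definition embedded_surface (d : nat) (a : int) (B : C) (c : int) : Prop :=
  forall al be ga de : C, in_SL2O d al be ga de ->
    let gH := fun q : C * C =>
      exists p, plane a B c p /\ q = mob_act al be ga de p in
    (forall q, gH q <-> plane a B c q) \/
    (forall q, ~ (gH q /\ plane a B c q)).

From mathcomp Require Import all_boot all_order all_algebra.
From mathcomp Require Import complex.
From mathcomp Require Import Rstruct.
From mathcomp Require Import ring.

Set Implicit Arguments.
Unset Strict Implicit.
Unset Printing Implicit Defensive.

Import Order.TTheory GRing.Theory Num.Theory.
Local Open Scope ring_scope.
Local Open Scope complex_scope.

(* Let n = Q_A(x, y) != 0 and complete (x, y) to the first column of some g
   in SL(2, C).  Then g^-1 H_A is the plane of the Hermitian form g^T A conj(g),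
   whose corner entry is n and whose determinant is still D: a hemisphere of
   Euclidean radius sqrt(D) / |n|.  Although g need not have entries in O_d,
   the parabolic g [[1, 1], [0, 1]] g^-1 = [[1 - xy, x^2], [-y^2, 1 + xy]]
   does.  So, by embeddedness, the hemisphere and its translate by 1 either
   coincide, which is impossible since the top point moves off, or are
   disjoint, which forces the radius to be at most 1/2, i.e. 4 D <= n^2. *)

Lemma sqrt_minus_sqr d : sqrt_minus d ^+ 2 = - d%:R.
Proof.
rewrite /sqrt_minus exprMn sqrCi -rmorphXn /= sqr_sqrtr ?ler0n //.
by rewrite rmorph_nat mulN1r.
Qed.

Lemma inO1 d : inO d 1.
Proof. by exists 1, 0; rewrite mul0r addr0. Qed.

Lemma inOD d x y : inO d x -> inO d y -> inO d (x + y).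
Proof.
move=> [u1 [v1 ->]] [u2 [v2 ->]]; exists (u1 + u2), (v1 + v2).
by rewrite !rmorphD /=; ring.
Qed.

Lemma inON d x : inO d x -> inO d (- x).
Proof. by move=> [u [v ->]]; exists (- u), (- v); rewrite !rmorphN /=; ring. Qed.

Lemma inO_omega_sqr d : inO d (omega d ^+ 2).
Proof.
rewrite /inO /omega; case: ifP => [/eqP d_mod4 | _]; last first.
  by exists (- d%:Z), 0; rewrite sqrt_minus_sqr mul0r addr0 rmorphN.
have d_eq : (d%:R : C) = 4 * (d %/ 4)%:R + 3.
  by rewrite {1}(divn_eq d 4) d_mod4 natrD natrM mulrC.
exists (- (d %/ 4)%:Z - 1), 1.
rewrite expr_div_n sqrrD sqrt_minus_sqr d_eq rmorphB rmorphN /=.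
by field.
Qed.

Lemma inOM d x y : inO d x -> inO d y -> inO d (x * y).
Proof.
have [e1 [e2 omega2]] := inO_omega_sqr d.
move=> [u1 [v1 ->]] [u2 [v2 ->]].
exists (u1 * u2 + v1 * v2 * e1), (u1 * v2 + u2 * v1 + v1 * v2 * e2).
transitivity (u1%:~R * u2%:~R + (u1%:~R * v2%:~R + u2%:~R * v1%:~R) * omega d
  + v1%:~R * v2%:~R * omega d ^+ 2 : C); first by ring.
by rewrite omega2 !rmorphD !rmorphM /=; ring.
Qed.

Lemma translate_conj_in_SL2O d x y : inO d x -> inO d y ->
  in_SL2O d (1 - x * y) (x ^+ 2) (- y ^+ 2) (1 + x * y).
Proof.
move=> Ox Oy; have Oxy := inOM Ox Oy; have Ox2 := inOM Ox Ox; have Oy2 := inOM Oy Oy.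
split; rewrite ?expr2.
- exact/(inOD (inO1 d))/inON.
- exact: Ox2.
- exact: inON.
- exact: inOD (inO1 d) Oxy.
- by ring.
Qed.

Section HermitianForms.
Variables (R : fieldType) (cj : {rmorphism R -> R}).
Hypothesis cjK : involutive cj.

(* [HForm a b c] stands for the Hermitian matrix [[a, b], [cj b, c]], and
   [hf_act A al be ga de] for g^T A (cj g) with g = [[al, be], [ga, de]]. *)
Record hform := HForm { hfa : R; hfb : R; hfc : R }.

Definition hf_real (A : hform) : Prop := cj (hfa A) = hfa A /\ cj (hfc A) = hfc A.

Definition hf_det (A : hform) : R := hfb A * cj (hfb A) - hfa A * hfc A.

Definition hf_polar (A : hform) (x y u v : R) : R :=
  hfa A * x * cj u + hfb A * x * cj v + cj (hfb A) * y * cj u + hfc A * y * cj v.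

Definition hf_act (A : hform) (al be ga de : R) : hform :=
  HForm (hf_polar A al ga al ga) (hf_polar A al ga be de) (hf_polar A be de be de).

Definition plane_eq (A : hform) (p : R * R) : R :=
  hfa A * (p.1 * cj p.1 + p.2 ^+ 2) + hfb A * p.1 + cj (hfb A) * cj p.1 + hfc A.

Definition mob_den (ga de : R) (p : R * R) : R :=
  (ga * p.1 + de) * cj (ga * p.1 + de) + ga * cj ga * p.2 ^+ 2.

Definition mob_num (al be ga de : R) (p : R * R) : R :=
  (al * p.1 + be) * cj (ga * p.1 + de) + al * cj ga * p.2 ^+ 2.

Lemma mob_den_conj ga de p : cj p.2 = p.2 -> cj (mob_den ga de p) = mob_den ga de p.
Proof. by move=> t_real; rewrite /mob_den !(rmorphD, rmorphM, rmorphXn) !cjK t_real; ring. Qed.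

Lemma mob_num_norm al be ga de p : cj p.2 = p.2 -> al * de - be * ga = 1 ->
  mob_num al be ga de p * cj (mob_num al be ga de p) + p.2 ^+ 2 =
  mob_den ga de p * ((al * p.1 + be) * cj (al * p.1 + be) + al * cj al * p.2 ^+ 2).
Proof.
move=> t_real det1.
have det_norm : (al * de - be * ga) * cj (al * de - be * ga) = 1.
  by rewrite det1 rmorph1 mulr1.
rewrite -[X in _ + X = _]mulr1 -det_norm.
rewrite /mob_num /mob_den !(rmorphB, rmorphD, rmorphM, rmorphXn) !cjK t_real.
by ring.
Qed.

Variable A : hform.
Hypothesis A_real : hf_real A.

Lemma hf_polar_conj x y u v : cj (hf_polar A x y u v) = hf_polar A u v x y.
Proof. by case: A_real => ra rc; rewrite /hf_polar !(rmorphD, rmorphM) !cjK ra rc; ring. Qed.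

Lemma hf_act_real al be ga de : hf_real (hf_act A al be ga de).
Proof. by split; rewrite /= hf_polar_conj. Qed.

Lemma hf_polar_act al be ga de x y u v :
  hf_polar (hf_act A al be ga de) x y u v =
  hf_polar A (al * x + be * y) (ga * x + de * y) (al * u + be * v) (ga * u + de * v).
Proof. by rewrite [LHS]/hf_polar /= hf_polar_conj /hf_polar !(rmorphD, rmorphM); ring. Qed.

Lemma hf_actM g1 g2 g3 g4 h1 h2 h3 h4 :
  hf_act (hf_act A g1 g2 g3 g4) h1 h2 h3 h4 =
  hf_act A (g1 * h1 + g2 * h3) (g1 * h2 + g2 * h4) (g3 * h1 + g4 * h3) (g3 * h2 + g4 * h4).
Proof. by rewrite /hf_act !hf_polar_act. Qed.

Lemma hf_det_act al be ga de :
  hf_det (hf_act A al be ga de) = (al * de - be * ga) * cj (al * de - be * ga) * hf_det A.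
Proof.
rewrite /hf_det /= hf_polar_conj /hf_polar.
by rewrite !(rmorphB, rmorphD, rmorphM); ring.
Qed.

Lemma plane_eq_translate p : plane_eq (hf_act A 1 1 0 1) p = plane_eq A (p.1 + 1, p.2).
Proof.
rewrite /plane_eq /= hf_polar_conj /hf_polar.
by rewrite !(rmorphD, rmorphM, rmorph1, rmorph0); ring.
Qed.

Lemma plane_eq_center s t : hfa A != 0 ->
  plane_eq A (- cj (hfb A) / hfa A + s, t) = hfa A * (s * cj s + t ^+ 2) - hf_det A / hfa A.
Proof.
case: A_real => ra _ a0; rewrite /plane_eq /hf_det /=.
by rewrite !(rmorphD, rmorphM, rmorphN) fmorphV cjK ra; field.
Qed.

Lemma plane_eq_mob al be ga de p : cj p.2 = p.2 -> al * de - be * ga = 1 ->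
  mob_den ga de p != 0 ->
  plane_eq A (mob_num al be ga de p / mob_den ga de p, p.2 / mob_den ga de p)
    * mob_den ga de p = plane_eq (hf_act A al be ga de) p.
Proof.
move=> t_real det1 N0; have N_real := mob_den_conj ga de t_real.
have w_norm := mob_num_norm t_real det1.
set N := mob_den ga de p in N0 N_real w_norm *; set w := mob_num al be ga de p in w_norm *.
rewrite /plane_eq /= !rmorphM fmorphV N_real.
transitivity ((hfa A * (w * cj w + p.2 ^+ 2) + N * (hfb A * w + cj (hfb A) * cj w)
  + hfc A * N ^+ 2) / N); first by field.
rewrite w_norm; transitivity (hfa A * ((al * p.1 + be) * cj (al * p.1 + be) + al * cj al * p.2 ^+ 2)
  + hfb A * w + cj (hfb A) * cj w + hfc A * N); first by field.
rewrite /w /N /mob_num /mob_den /= hf_polar_conj /hf_polar.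
case: A_real => ra rc.
by rewrite !(rmorphB, rmorphD, rmorphM, rmorphXn) !cjK t_real ?ra ?rc; ring.
Qed.

End HermitianForms.

Definition on_plane (A : hform C) (p : C * C) : Prop := H3 p /\ plane_eq conjc A p = 0.

Lemma H3_real (p : C * C) : H3 p -> p.2^* = p.2.
Proof. by move/gtr0_real/conj_Creal. Qed.

Lemma mob_den_gt0 al be ga de (p : C * C) : H3 p -> al * de - be * ga = 1 ->
  0 < mob_den conjc ga de p.
Proof.
move=> t_gt0 det1; rewrite /mob_den /=.
case: (eqVneq ga 0) det1 => [-> | ga0] det1.
  rewrite !mul0r add0r addr0 mul_conjC_gt0; apply: contra_eq_neq det1 => ->.
  by rewrite !mulr0 subr0 eq_sym oner_neq0.
apply: ltr_wpDl; first exact: mul_conjC_ge0.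
by rewrite mulr_gt0 ?exprn_gt0 // mul_conjC_gt0.
Qed.

Lemma H3_mob_act al be ga de (p : C * C) : H3 p -> al * de - be * ga = 1 ->
  H3 (mob_act al be ga de p).
Proof. by move=> t_gt0 det1; apply: divr_gt0 t_gt0 (mob_den_gt0 t_gt0 det1). Qed.

Lemma plane_eq_mob_act (A : hform C) al be ga de (p : C * C) :
  hf_real conjc A -> H3 p -> al * de - be * ga = 1 ->
  plane_eq conjc A (mob_act al be ga de p) * mob_den conjc ga de p =
  plane_eq conjc (hf_act conjc A al be ga de) p.
Proof.
move=> A_real t_gt0 det1; have N_gt0 := mob_den_gt0 t_gt0 det1.
exact: (plane_eq_mob (@conjcK _) A_real (H3_real t_gt0) det1 (lt0r_neq0 N_gt0)).
Qed.

Lemma on_plane_mob_act (A : hform C) al be ga de (p : C * C) :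
  hf_real conjc A -> H3 p -> al * de - be * ga = 1 ->
  on_plane A (mob_act al be ga de p) <-> on_plane (hf_act conjc A al be ga de) p.
Proof.
move=> A_real t_gt0 det1; have N_gt0 := mob_den_gt0 t_gt0 det1.
rewrite /on_plane -(plane_eq_mob_act A_real t_gt0 det1).
split=> -[_ eq0]; split=> //.
- by rewrite eq0 mul0r.
- exact: H3_mob_act.
- by apply/eqP; move/eqP: eq0; rewrite mulf_eq0 (gt_eqF N_gt0) orbF.
Qed.

Lemma on_plane_translate_conj (A : hform C) x y u v (p : C * C) :
  hf_real conjc A -> x * v - u * y = 1 -> H3 p ->
  on_plane A (mob_act (1 - x * y) (x ^+ 2) (- y ^+ 2) (1 + x * y) (mob_act x u y v p))
  <-> on_plane (hf_act conjc A x u y v) (p.1 + 1, p.2).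
Proof.
move=> A_real det_g t_gt0.
have det_T : (1 - x * y) * (1 + x * y) - x ^+ 2 * - y ^+ 2 = 1 by ring.
rewrite on_plane_mob_act //; last exact: H3_mob_act.
rewrite on_plane_mob_act ?(hf_actM (@conjcK _)) //; last exact: (hf_act_real (@conjcK _)).
have -> : (1 - x * y) * x + x ^+ 2 * y = x * 1 + u * 0 by ring.
have -> : - y ^+ 2 * x + (1 + x * y) * y = y * 1 + v * 0 by ring.
have -> : (1 - x * y) * u + x ^+ 2 * v = x * 1 + u * 1 by rewrite -det_g; ring.
have -> : - y ^+ 2 * u + (1 + x * y) * v = y * 1 + v * 1 by rewrite -det_g; ring.
rewrite -(hf_actM (@conjcK _)) //.
by rewrite /on_plane (plane_eq_translate (@conjcK _)) //; exact: (hf_act_real (@conjcK _)).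
Qed.

Section Hemisphere.
Variable A : hform C.
Hypotheses (A_real : hf_real conjc A) (a_neq0 : hfa A != 0).

Lemma hfa_sqr_gt0 : 0 < hfa A ^+ 2.
Proof. by case: A_real => ra _; rewrite expr2 -{2}ra mul_conjC_gt0. Qed.

Lemma on_plane_center s t : 0 < t ->
  on_plane A (- (hfb A)^* / hfa A + s, t) <->
  s * s^* + t ^+ 2 = hf_det conjc A / hfa A ^+ 2.
Proof.
move=> t_gt0; rewrite /on_plane (plane_eq_center (@conjcK _)) //.
split=> [[_ /eqP] | ->]; last by split=> //; field.
by rewrite subr_eq0 => /eqP eq_Da; apply: (mulfI a_neq0); rewrite eq_Da; field.
Qed.

Lemma hemisphere_top_off_translate : 0 < hf_det conjc A ->
  exists p, on_plane A p /\ ~ on_plane A (p.1 + 1, p.2).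
Proof.
move=> D_gt0; set r2 := hf_det conjc A / hfa A ^+ 2.
have r_gt0 : 0 < sqrtC r2 by rewrite sqrtC_gt0 divr_gt0 ?hfa_sqr_gt0.
exists (- (hfb A)^* / hfa A + 0, sqrtC r2); split.
  by apply/on_plane_center; rewrite // mul0r add0r sqrtCK.
rewrite /= -addrA add0r on_plane_center // rmorph1 mulr1 sqrtCK => /eqP.
by rewrite -subr_eq0 addrK oner_eq0.
Qed.

Lemma hemisphere_meets_translate : hfa A ^+ 2 < 4 * hf_det conjc A ->
  exists p, on_plane A p /\ on_plane A (p.1 + 1, p.2).
Proof.
move=> lt4D; set t2 := hf_det conjc A / hfa A ^+ 2 - 4^-1.
have t_gt0 : 0 < sqrtC t2.
  have -> : t2 = (4 * hf_det conjc A - hfa A ^+ 2) / (4 * hfa A ^+ 2) by rewrite /t2; field.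
  by rewrite sqrtC_gt0 divr_gt0 ?subr_gt0 // mulr_gt0 ?hfa_sqr_gt0.
have on_circle (s : C) : s = - 2^-1 \/ s = 2^-1 -> on_plane A (- (hfb A)^* / hfa A + s, sqrtC t2).
  move=> s_half; apply/on_plane_center; rewrite // sqrtCK /t2.
  by case: s_half => ->; rewrite ?rmorphN fmorphV rmorph_nat; field.
exists (- (hfb A)^* / hfa A + - 2^-1, sqrtC t2); split; first by apply: on_circle; left.
by rewrite /= -addrA; apply: on_circle; right; field.
Qed.

Lemma translate_dichotomy_bound : 0 < hf_det conjc A ->
  (forall p, on_plane A p -> on_plane A (p.1 + 1, p.2)) \/
  (forall p, on_plane A p -> ~ on_plane A (p.1 + 1, p.2)) ->
  4 * hf_det conjc A <= hfa A ^+ 2.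
Proof.
move=> D_gt0 [closed | disjoint].
  by have [p [Ap Ap1]] := hemisphere_top_off_translate D_gt0; case: Ap1; apply: closed.
rewrite real_leNgt ?gtr0_real ?hfa_sqr_gt0 ?mulr_gt0 //; apply/negP => lt4D.
by have [p [Ap Ap1]] := hemisphere_meets_translate lt4D; apply: disjoint Ap Ap1.
Qed.

End Hemisphere.

Lemma det1_completion (F : fieldType) (x y : F) : (x != 0) || (y != 0) ->
  exists u v, x * v - u * y = 1.
Proof.
case/orP=> [x0 | y0]; first by exists 0, x^-1; rewrite mulfV // mul0r subr0.
by exists (- y^-1), 0; rewrite mulr0 sub0r mulNr opprK mulVf.
Qed.

Lemma hf_real_int (a c : int) (B : C) : hf_real conjc (HForm a%:~R B c%:~R).
Proof. by split; apply: rmorph_int. Qed.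

Lemma embedded_translate_dichotomy d a B c x y u v :
  embedded_surface d a B c -> inO d x -> inO d y -> x * v - u * y = 1 ->
  let A := hf_act conjc (HForm a%:~R B c%:~R) x u y v in
  (forall p, on_plane A p -> on_plane A (p.1 + 1, p.2)) \/
  (forall p, on_plane A p -> ~ on_plane A (p.1 + 1, p.2)).
Proof.
move=> emb Ox Oy det_g A; have A0_real := hf_real_int a c B.
pose T := mob_act (1 - x * y) (x ^+ 2) (- y ^+ 2) (1 + x * y).
have g_plane p : on_plane A p -> plane a B c (mob_act x u y v p).
  by move=> Ap; apply/(on_plane_mob_act A0_real Ap.1 det_g).
have T_plane p : H3 p -> plane a B c (T (mob_act x u y v p)) <-> on_plane A (p.1 + 1, p.2).
  by move=> t_gt0; exact: (on_plane_translate_conj A0_real det_g t_gt0).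
case: (emb _ _ _ _ (translate_conj_in_SL2O Ox Oy)) => /= [same | disjoint].
  left=> p Ap; apply/(T_plane p Ap.1)/(same _).1.
  by exists (mob_act x u y v p); split; first exact: g_plane.
right=> p Ap Ap1; apply: (disjoint (T (mob_act x u y v p))); split.
  by exists (mob_act x u y v p); split; first exact: g_plane.
exact/(T_plane p Ap.1).
Qed.

Theorem corollary3p6 (d : nat) (a c : int) (B : C) :
  squarefree d ->
  inO d B ->
  0 < B * B^* - (a * c)%:~R ->
  embedded_surface d a B c ->
  forall x y : C, inO d x -> inO d y -> QA a B c x y != 0 ->
    4 * (B * B^* - (a * c)%:~R) <= QA a B c x y ^+ 2.
Proof.
move=> _ _ D_gt0 emb x y Ox Oy Q_neq0.
have [u [v det_g]] : exists u v : C, x * v - u * y = 1.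
  apply: det1_completion; apply: contraNT Q_neq0; rewrite negb_or !negbK.
  by case/andP=> /eqP-> /eqP->; rewrite /QA !(mulr0, mul0r, addr0).
pose A := HForm (a%:~R : C) B c%:~R.
have A_real : hf_real conjc A := hf_real_int a c B.
have D_eq : B * B^* - (a * c)%:~R = hf_det conjc (hf_act conjc A x u y v).
  by rewrite (hf_det_act (@conjcK _) A_real) det_g rmorph1 !mul1r /hf_det intrM.
rewrite D_eq in D_gt0 *; apply: translate_dichotomy_bound => //.
- exact: (hf_act_real (@conjcK _) A_real).
- exact: (embedded_translate_dichotomy emb Ox Oy det_g).
Qed.
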